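(* Let $A$ be a pc monoid whose seminormalization $A\to A_{\mathrm{sn}}$ exists, let $I$ be an ideal of $A$, and set $J=\sqrt{IA_{\mathrm{sn}}}$. Then the induced map $A/I\to A_{\mathrm{sn}}/J$ is the seminormalization of $A/I$.
   Context: A monoid is a pointed commutative monoid. An ideal is a subset $I\ni0$ with $AI\subseteq I$; $A/I$ collapses $I$ to $0$; $IB$ is the ideal of $B$ generated by the image of $I$; $\sqrt{K}=\{b: b^n\in K\text{ for some }n\ge1\}$. pc: isomorphic to $C/I$ with $C$ cancellative ($ac=bc,c\ne0\Rightarrow a=b$). Reduced: $a^2=b^2,a^3=b^3\Rightarrow a=b$; $A_{\mathrm{red}}$ is $A$ modulo $a\sim b$ iff $a^n=b^n$ for all $n\gg0$. Seminormal: reduced and $x^3=y^2\Rightarrow x=z^2,y=z^3$ for some $z$. A seminormalization of $A$ is a map $A\to B$ with $B$ seminormal, $A_{\mathrm{red}}\to B$ injective, and $b^n\in A_{\mathrm{red}}$ for all $n\gg0$ for every $b\in B$. *)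

From Stdlib Require Import Arith Lia ClassicalEpsilon ProofIrrelevance.

Set Implicit Arguments.

Record pmonoid := PMonoid {
  car :> Type;
  mul : car -> car -> car;
  one : car;
  zero : car;
  mulA : forall a b c, mul a (mul b c) = mul (mul a b) c;
  mulC : forall a b, mul a b = mul b a;
  mul1 : forall a, mul one a = a;
  mul0 : forall a, mul zero a = zero
}.

Arguments mul {p}.
Arguments one {p}.
Arguments zero {p}.

Definition pw {A : pmonoid} (a : A) (n : nat) : A := Nat.iter n (mul a) one.

Definition is_hom {A B : pmonoid} (f : A -> B) : Prop :=
  (forall a b, f (mul a b) = mul (f a) (f b)) /\ f one = one /\ f zero = zero.

Definition is_iso {A B : pmonoid} (f : A -> B) : Prop :=
  is_hom f /\ (forall a b, f a = f b -> a = b) /\ (forall b, exists a, f a = b).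

Definition is_ideal (A : pmonoid) (I : A -> Prop) : Prop :=
  I zero /\ forall a x : A, I x -> I (mul a x).

Definition ext_ideal {A B : pmonoid} (f : A -> B) (I : A -> Prop) : B -> Prop :=
  fun b => exists (x : B) (a : A), I a /\ b = mul x (f a).

Definition rad {B : pmonoid} (K : B -> Prop) : B -> Prop :=
  fun b => exists n, 1 <= n /\ K (pw b n).

Definition cancellative (C : pmonoid) : Prop :=
  forall a b c : C, c <> zero -> mul a c = mul b c -> a = b.

Definition reduced (A : pmonoid) : Prop :=
  forall a b : A, pw a 2 = pw b 2 -> pw a 3 = pw b 3 -> a = b.

Definition seminormal (A : pmonoid) : Prop :=
  reduced A /\
  forall x y : A, pw x 3 = pw y 2 -> exists z : A, x = pw z 2 /\ y = pw z 3.

(* the relation defining A_red: a ~ b iff a^n = b^n for all n >> 0 *)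
Definition red_rel {A : pmonoid} (a b : A) : Prop :=
  exists N, forall n, N <= n -> pw a n = pw b n.

Section Quot.
Variables (A : pmonoid) (I : A -> Prop) (hI : is_ideal A I).

Definition qcar : Type := { a : A | a = zero \/ ~ I a }.

Definition qval (a : A) : A :=
  if excluded_middle_informative (I a) then zero else a.

Lemma qval_prop (a : A) : qval a = zero \/ ~ I (qval a).
Proof.
  unfold qval; destruct (excluded_middle_informative (I a)); auto.
Qed.

Definition qproj (a : A) : qcar := exist _ (qval a) (qval_prop a).

Lemma qcar_eq (x y : qcar) : proj1_sig x = proj1_sig y -> x = y.
Proof.
  destruct x as [x px], y as [y py]; simpl; intros ->.
  f_equal; apply proof_irrelevance.
Qed.

Lemma qval_in (a : A) : I a -> qval a = zero.
Proof. unfold qval; destruct (excluded_middle_informative (I a)); tauto. Qed.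

Lemma qval_out (a : A) : ~ I a -> qval a = a.
Proof. unfold qval; destruct (excluded_middle_informative (I a)); tauto. Qed.

Lemma qproj_val (x : qcar) : qproj (proj1_sig x) = x.
Proof.
  apply qcar_eq; simpl; destruct x as [x [px|px]]; simpl.
  - subst; apply qval_in, (proj1 hI).
  - apply qval_out, px.
Qed.

Lemma qproj_norm (a b : A) : qproj (mul (qval a) b) = qproj (mul a b).
Proof.
  apply qcar_eq; simpl.
  destruct (excluded_middle_informative (I a)) as [h|h].
  - rewrite (qval_in h), mul0.
    rewrite (qval_in (proj1 hI)).
    rewrite qval_in; auto. rewrite mulC; apply (proj2 hI), h.
  - rewrite (qval_out h); reflexivity.
Qed.

Definition qmul (x y : qcar) : qcar := qproj (mul (proj1_sig x) (proj1_sig y)).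
Definition qone : qcar := qproj one.
Definition qzero : qcar := qproj zero.

Lemma qmulA (x y z : qcar) : qmul x (qmul y z) = qmul (qmul x y) z.
Proof.
  unfold qmul; simpl.
  rewrite (qproj_norm (mul (proj1_sig x) (proj1_sig y))).
  rewrite mulC, (qproj_norm (mul (proj1_sig y) (proj1_sig z))).
  f_equal; rewrite mulC, mulA; reflexivity.
Qed.

Lemma qmulC (x y : qcar) : qmul x y = qmul y x.
Proof. unfold qmul; rewrite mulC; reflexivity. Qed.

Lemma qmul1 (x : qcar) : qmul qone x = x.
Proof. unfold qmul, qone; simpl; rewrite qproj_norm, mul1; apply qproj_val. Qed.

Lemma qmul0 (x : qcar) : qmul qzero x = qzero.
Proof. unfold qmul, qzero; simpl; rewrite qproj_norm, mul0; reflexivity. Qed.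

Definition quot : pmonoid := @PMonoid qcar qmul qone qzero qmulA qmulC qmul1 qmul0.

End Quot.

Definition pc (A : pmonoid) : Prop :=
  exists (C : pmonoid) (I : C -> Prop) (hI : is_ideal C I) (g : A -> quot hI),
    cancellative C /\ is_iso g.

(* f : A -> B is a seminormalization of A:
   B seminormal, the induced map A_red -> B is (well defined and) injective,
   i.e. f a = f b <-> a ~ b, and every b has b^n in the image of A_red
   (= image of A) for all n >> 0. *)
Definition is_seminormalization {A B : pmonoid} (f : A -> B) : Prop :=
  is_hom f /\ seminormal B /\
  (forall a b : A, f a = f b <-> red_rel a b) /\
  (forall b : B, exists N, forall n, N <= n -> exists a : A, f a = pw b n).

Lemma rad_ext_ideal_is_ideal {A B : pmonoid} (f : A -> B) (I : A -> Prop) :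
  is_ideal A I -> is_ideal B (rad (ext_ideal f I)).
Proof.
  intros [I0 IM]; split.
  - exists 1; split; [lia|]. exists zero, zero; split; [exact I0|].
    unfold pw; simpl; rewrite !mul0; reflexivity.
  - intros a x [n [hn [y [c [hc e]]]]].
    exists n; split; [exact hn|].
    assert (E : forall m, pw (mul a x) m = mul (pw a m) (pw x m)).
    { induction m; unfold pw in *; simpl. rewrite mul1; reflexivity.
      rewrite IHm, <- !mulA. f_equal.
      rewrite !mulA, (mulC _ x); reflexivity. }
    exists (mul (pw a n) y), c; split; [exact hc|].
    rewrite E, e, mulA; reflexivity.
Qed.

Definition induced_map {A B : pmonoid} (I : A -> Prop) (J : B -> Prop)
  (hI : is_ideal A I) (hJ : is_ideal B J) (f : A -> B) :
  quot hI -> quot hJ :=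
  fun x => @qproj B J (f (proj1_sig x)).

(* The contraction of J = sqrt(I B) along f : A -> B is sqrt I: if f(a)^n = x f(c) with c in I,
   some power of x is the image of an element of A, so a power of a agrees in A_red with an
   element of I, hence lies in I.  Therefore an element of A/I is nilpotent exactly when its
   representative lies in sqrt I, exactly when its image in B/J is 0, and away from sqrt I the
   induced map behaves like f itself.  Seminormality passes to quotients by radical ideals. *)
From Stdlib Require Import Arith Lia Classical.

Section Powers.
Variable A : pmonoid.

Lemma pw_S (a : A) n : pw a (S n) = mul a (pw a n).
Proof. reflexivity. Qed.

Lemma pw_1 (a : A) : pw a 1 = a.
Proof. unfold pw; simpl; rewrite mulC, mul1; reflexivity. Qed.

Lemma pw_add (a : A) n m : pw a (n + m) = mul (pw a n) (pw a m).
Proof.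
  induction n as [|n IH]; simpl.
  - rewrite mul1; reflexivity.
  - change (mul a (pw a (n + m)) = mul (mul a (pw a n)) (pw a m)).
    rewrite IH, mulA; reflexivity.
Qed.

Lemma pw_mul (a b : A) n : pw (mul a b) n = mul (pw a n) (pw b n).
Proof.
  induction n as [|n IH].
  - unfold pw; simpl; rewrite mul1; reflexivity.
  - rewrite !pw_S, IH, <- !mulA; f_equal.
    rewrite !mulA, (mulC _ b (pw a n)); reflexivity.
Qed.

Lemma pw_pw (a : A) n m : pw a (n * m) = pw (pw a n) m.
Proof.
  induction m as [|m IH].
  - rewrite Nat.mul_0_r; reflexivity.
  - rewrite Nat.mul_succ_r, Nat.add_comm, pw_add, IH; reflexivity.
Qed.

Lemma rad_of_pw (K : A -> Prop) b n : 1 <= n -> rad K (pw b n) -> rad K b.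
Proof.
  intros hn [m [hm Km]]; exists (n * m); split; [nia|].
  rewrite pw_pw; exact Km.
Qed.

Variables (K : A -> Prop) (hK : is_ideal A K).

Lemma ideal_pw a n : 1 <= n -> K a -> K (pw a n).
Proof.
  intros hn Ka; destruct n as [|n]; [lia|].
  rewrite pw_S, mulC; apply (proj2 hK), Ka.
Qed.

Lemma ideal_pw_le a m n : m <= n -> K (pw a m) -> K (pw a n).
Proof.
  intros hmn Kam; replace n with ((n - m) + m) by lia.
  rewrite pw_add; apply (proj2 hK), Kam.
Qed.

Lemma ideal_rad a : K a -> rad K a.
Proof. intro Ka; exists 1; split; [lia|]; rewrite pw_1; exact Ka. Qed.

End Powers.

Lemma hom_pw (A B : pmonoid) (f : A -> B) : is_hom f ->
  forall a n, f (pw a n) = pw (f a) n.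
Proof.
  intros [hfm [hf1 _]] a n; induction n as [|n IH]; [exact hf1|].
  rewrite !pw_S, hfm, IH; reflexivity.
Qed.

Arguments ideal_pw {A K} hK a n _ _.
Arguments ideal_pw_le {A K} hK a m n _ _.
Arguments ideal_rad {A K} a _.
Arguments hom_pw {A B f} _ a n.

Section Quotient.
Variables (A : pmonoid) (I : A -> Prop) (hI : is_ideal A I).

Lemma qproj_surj (x : quot hI) : exists a, x = qproj A I a.
Proof. exists (proj1_sig x); symmetry; apply (qproj_val hI). Qed.

Lemma qproj_mul a b :
  @mul (quot hI) (qproj A I a) (qproj A I b) = qproj A I (mul a b).
Proof.
  simpl; unfold qmul; simpl.
  rewrite (qproj_norm hI), mulC, (qproj_norm hI), mulC; reflexivity.
Qed.

Lemma qproj_pw a n : @pw (quot hI) (qproj A I a) n = qproj A I (pw a n).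
Proof.
  induction n as [|n IH]; [reflexivity|].
  change (@mul (quot hI) (qproj A I a) (@pw (quot hI) (qproj A I a) n)
          = qproj A I (pw a (S n))).
  rewrite IH, qproj_mul; reflexivity.
Qed.

Lemma qproj_eq a b : qproj A I a = qproj A I b <->
  (I a /\ I b) \/ (~ I a /\ ~ I b /\ a = b).
Proof.
  split.
  - intro e.
    assert (ev : qval A I a = qval A I b) by exact (f_equal (@proj1_sig _ _) e).
    destruct (classic (I a)) as [Ia|Ia], (classic (I b)) as [Ib|Ib]; auto.
    + rewrite (qval_in _ _ _ Ia), (qval_out _ _ _ Ib) in ev; subst b.
      exfalso; apply Ib, (proj1 hI).
    + rewrite (qval_in _ _ _ Ib), (qval_out _ _ _ Ia) in ev; subst a.
      exfalso; apply Ia, (proj1 hI).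
    + rewrite (qval_out _ _ _ Ia), (qval_out _ _ _ Ib) in ev; auto.
  - intros [[Ia Ib]|[_ [_ ->]]]; [|reflexivity].
    apply qcar_eq; simpl.
    rewrite (qval_in _ _ _ Ia), (qval_in _ _ _ Ib); reflexivity.
Qed.

Lemma red_rel_qproj a b :
  @red_rel (quot hI) (qproj A I a) (qproj A I b) <->
  (rad I a /\ rad I b) \/ (~ rad I a /\ ~ rad I b /\ red_rel a b).
Proof.
  assert (rad_eventually : forall c N, rad I c -> exists n, N <= n /\ I (pw c n)).
  { intros c N [m [_ Icm]]; exists (N + m); split; [lia|].
    apply (ideal_pw_le hI c m); [lia|exact Icm]. }
  unfold red_rel; setoid_rewrite qproj_pw; setoid_rewrite qproj_eq; split.
  - intros [N hN].
    destruct (classic (rad I a)) as [Ra|Ra]; [left|right].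
    + split; [exact Ra|].
      destruct (rad_eventually a (S N) Ra) as [n [hn Ian]].
      destruct (hN n ltac:(lia)) as [[_ Ibn]|[nIan _]]; [|contradiction].
      exists n; split; [lia|exact Ibn].
    + split; [exact Ra|split].
      * intro Rb; destruct (rad_eventually b (S N) Rb) as [n [hn Ibn]].
        destruct (hN n ltac:(lia)) as [[Ian _]|[_ [nIbn _]]]; [|contradiction].
        apply Ra; exists n; split; [lia|exact Ian].
      * exists (S N); intros n hn.
        destruct (hN n ltac:(lia)) as [[Ian _]|[_ [_ e]]]; [|exact e].
        exfalso; apply Ra; exists n; split; [lia|exact Ian].
  - intros [[[m [_ Iam]] [k [_ Ibk]]]|[Ra [Rb [N hN]]]].
    + exists (m + k); intros n hn; left; split.
      * apply (ideal_pw_le hI a m); [lia|exact Iam].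
      * apply (ideal_pw_le hI b k); [lia|exact Ibk].
    + exists (S N); intros n hn; right; split; [|split].
      * intro Ian; apply Ra; exists n; split; [lia|exact Ian].
      * intro Ibn; apply Rb; exists n; split; [lia|exact Ibn].
      * apply hN; lia.
Qed.

Hypothesis I_radical : forall a n, 1 <= n -> I (pw a n) -> I a.

Lemma quot_reduced : reduced A -> reduced (quot hI).
Proof.
  intros redA x y.
  destruct (qproj_surj x) as [a ->], (qproj_surj y) as [b ->].
  rewrite !qproj_pw; intros e2 e3; apply qproj_eq in e2, e3.
  destruct e2 as [[Ia2 Ib2]|[nIa2 [nIb2 e2]]].
  - apply qproj_eq; left; split.
    + exact (I_radical a 2 ltac:(lia) Ia2).
    + exact (I_radical b 2 ltac:(lia) Ib2).
  - destruct e3 as [[Ia3 _]|[_ [_ e3]]].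
    + exfalso; apply nIa2, (ideal_pw hI); [lia|].
      exact (I_radical a 3 ltac:(lia) Ia3).
    + f_equal; apply redA; assumption.
Qed.

Lemma quot_seminormal : seminormal A -> seminormal (quot hI).
Proof.
  intros [redA snA]; split; [exact (quot_reduced redA)|].
  intros x y.
  destruct (qproj_surj x) as [a ->], (qproj_surj y) as [b ->].
  rewrite !qproj_pw, qproj_eq.
  intros [[Ia3 Ib2]|[_ [_ e]]].
  - exists (qproj A I zero); rewrite !qproj_pw.
    assert (I0 : forall n, 1 <= n -> I (pw zero n))
      by (intros n hn; apply (ideal_pw hI); [exact hn|exact (proj1 hI)]).
    split; apply qproj_eq; left; split; eauto.
  - destruct (snA a b e) as [z [-> ->]].
    exists (qproj A I z); rewrite !qproj_pw; split; reflexivity.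
Qed.

End Quotient.

Arguments qproj_surj {A I} hI x.
Arguments qproj_mul {A I} hI a b.
Arguments qproj_pw {A I} hI a n.
Arguments qproj_eq {A I} hI a b.
Arguments red_rel_qproj {A I} hI a b.
Arguments quot_seminormal {A I} hI _ _.

Section InducedMap.
Variables (A B : pmonoid) (f : A -> B) (I : A -> Prop) (J : B -> Prop).
Variables (hI : is_ideal A I) (hJ : is_ideal B J).
Hypotheses (hf : is_hom f) (f_IJ : forall a, I a -> J (f a)).

Lemma induced_map_qproj a :
  @induced_map A B I J hI hJ f (qproj A I a) = qproj B J (f a).
Proof.
  unfold induced_map; simpl.
  destruct (classic (I a)) as [Ia|nIa].
  - rewrite (qval_in _ _ _ Ia), (proj2 (proj2 hf)).
    apply (qproj_eq hJ); left; split; [exact (proj1 hJ)|exact (f_IJ a Ia)].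
  - rewrite (qval_out _ _ _ nIa); reflexivity.
Qed.

Lemma induced_map_hom : is_hom (@induced_map A B I J hI hJ f).
Proof.
  destruct hf as [hfm [hf1 hf0]]; split; [|split].
  - intros x y.
    destruct (qproj_surj hI x) as [a ->], (qproj_surj hI y) as [b ->].
    rewrite (qproj_mul hI), !induced_map_qproj, hfm; symmetry; apply (qproj_mul hJ).
  - change (@one (quot hI)) with (qproj A I one).
    rewrite induced_map_qproj, hf1; reflexivity.
  - change (@zero (quot hI)) with (qproj A I zero).
    rewrite induced_map_qproj, hf0; reflexivity.
Qed.

End InducedMap.

Arguments induced_map_qproj {A B f I J} hI hJ hf f_IJ a.
Arguments induced_map_hom {A B f I J} hI hJ hf f_IJ.

Section ExtendedRadical.
Variables (A B : pmonoid) (f : A -> B) (I : A -> Prop) (hI : is_ideal A I).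

Lemma rad_ext_ideal_image a : is_hom f -> rad I a -> rad (ext_ideal f I) (f a).
Proof.
  intros hf [n [hn Ian]]; exists n; split; [exact hn|].
  exists one, (pw a n); split; [exact Ian|].
  rewrite mul1, (hom_pw hf); reflexivity.
Qed.

Lemma rad_ext_ideal_preimage a :
  is_seminormalization f -> rad (ext_ideal f I) (f a) -> rad I a.
Proof.
  intros [hf [_ [fibers powers]]] [n [hn [x [c [Ic e]]]]].
  destruct (powers x) as [N hN], (hN (S N) ltac:(lia)) as [a' ea'].
  assert (E : f (pw a (n * S N)) = f (mul a' (pw c (S N)))).
  { rewrite (hom_pw hf), pw_pw, e, pw_mul, (proj1 hf), ea', (hom_pw hf).
    reflexivity. }
  destruct (proj1 (fibers _ _) E) as [M hM].
  exists (n * S N * S M); split; [nia|].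
  rewrite pw_pw, hM by lia.
  apply (ideal_pw hI); [lia|]; apply (proj2 hI), (ideal_pw hI); [lia|exact Ic].
Qed.

End ExtendedRadical.

Arguments rad_ext_ideal_image {A B f} I a _ _.
Arguments rad_ext_ideal_preimage {A B f I} hI a _ _.

Theorem lemma1p14 (A B : pmonoid) (f : A -> B) (I : A -> Prop)
  (hpc : pc A) (hsn : is_seminormalization f) (hI : is_ideal A I) :
  is_seminormalization
    (@induced_map A B I (rad (ext_ideal f I)) hI
       (rad_ext_ideal_is_ideal f hI) f).
Proof.
  set (hJ := rad_ext_ideal_is_ideal f hI).
  pose proof hsn as [hf [snB [fibers powers]]].
  assert (J_contraction : forall a, rad (ext_ideal f I) (f a) <-> rad I a).
  { intro a; split.
    - exact (rad_ext_ideal_preimage hI a hsn).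
    - exact (rad_ext_ideal_image I a hf). }
  assert (f_IJ : forall a, I a -> rad (ext_ideal f I) (f a))
    by (intros a Ia; apply J_contraction, (ideal_rad a Ia)).
  split; [|split; [|split]].
  - exact (induced_map_hom hI hJ hf f_IJ).
  - apply (quot_seminormal hJ); [|exact snB].
    exact (@rad_of_pw B (ext_ideal f I)).
  - intros x y.
    destruct (qproj_surj hI x) as [a ->], (qproj_surj hI y) as [b ->].
    rewrite !(induced_map_qproj hI hJ hf f_IJ), (qproj_eq hJ), (red_rel_qproj hI),
      !J_contraction, fibers; reflexivity.
  - intro y; destruct (qproj_surj hJ y) as [b ->].
    destruct (powers b) as [N hN]; exists N; intros n hn.
    destruct (hN n hn) as [a ea]; exists (qproj A I a).
    rewrite (induced_map_qproj hI hJ hf f_IJ), ea, (qproj_pw hJ); reflexivity.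
Qed.
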